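(* Let $X$ be an infinite-dimensional complex Banach space, $T \in \mathcal{B}(X)$, and $N \in \mathcal{B}(X)$ a nilpotent operator commuting with $T$. Then $\Pi_{a}(T+N)=\Pi_{a}(T)$.
   Context: $\mathcal{B}(X)$ is the algebra of bounded linear operators on $X$. $\sigma_a(T)$ is the approximate point spectrum of $T$. For $A\in\mathcal{B}(X)$, $asc(A)=\inf\{n\in\mathbb{N}:\mathcal{N}(A^n)=\mathcal{N}(A^{n+1})\}$ (infimum of empty set is $\infty$); $A$ is left Drazin invertible if $asc(A)<\infty$ and $\mathcal{R}(A^{asc(A)+1})$ is closed. A left pole of $T$ is a $\lambda\in\sigma_a(T)$ such that $T-\lambda I$ is left Drazin invertible; $\Pi_a(T)$ is the set of left poles of $T$. *)

From HB Require Import structures.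
From mathcomp Require Import all_boot all_order all_algebra.
From mathcomp Require Import complex.
From mathcomp Require Import all_classical all_reals all_analysis.
Set Implicit Arguments. Unset Strict Implicit. Unset Printing Implicit Defensive.
Import Order.TTheory GRing.Theory Num.Theory.
Import numFieldNormedType.Exports.
Local Open Scope classical_set_scope.
Local Open Scope ring_scope.

Section Defs.
Variable (R : realType).
Local Notation C := (R[i])%C.
Variable (V : completeNormedModType C).

Definition bounded_op (A : V -> V) : Prop :=
  (forall (a : C) (x y : V), A (a *: x + y) = a *: A x + A y) /\ continuous A.

Definition infinite_dim : Prop :=
  forall s : seq V, exists x : V,
    ~ exists c : 'I_(size s) -> C, x = \sum_(i < size s) c i *: s`_i.

Definition opow (A : V -> V) (n : nat) : V -> V := iter n A.

Definition kernel (A : V -> V) : set V := [set x | A x = 0].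

Definition is_asc (A : V -> V) (p : nat) : Prop :=
  kernel (opow A p) = kernel (opow A p.+1) /\
  forall m, (m < p)%N -> kernel (opow A m) <> kernel (opow A m.+1).

Definition left_drazin_invertible (A : V -> V) : Prop :=
  exists p, is_asc A p /\ closed (range (opow A p.+1)).

Definition shift (T : V -> V) (l : C) : V -> V := fun x => T x - l *: x.

Definition approx_spectrum (T : V -> V) : set C :=
  [set l | ~ exists c : R, (0 < c)%R /\ forall x : V,
       ((c%:C)%C * `|x| <= `|shift T l x|)%R ].

Definition left_poles (T : V -> V) : set C :=
  [set l | approx_spectrum T l /\ left_drazin_invertible (shift T l)].

Definition nilpotent (A : V -> V) : Prop := exists k, forall x, opow A k x = 0.

End Defs.

(* Say that [A] is dominated modulo [K] when dist(x, K) <= D dist(A x, K).  An operator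
   bounded below is dominated modulo {0}; a left Drazin invertible [S] of ascent [p] is
   dominated modulo [ker S^p], by the open mapping theorem for [S^(p+1)], whose range is
   closed.  Domination modulo an [N]-invariant [K] survives the addition of a commuting
   nilpotent [N]: descending from [N^k = 0], each dist(N^i x, K) is bounded by
   dist((S + N) x, K).  As [ker S^p] is killed by [(S + N)^(p+k)] and contains every
   [ker (S + N)^n], the ascent of [S + N] is finite, and domination modulo [ker S^p] gives
   its powers bounded lifts, hence closed ranges.  So left poles of [T] are left poles of
   [T + N], and the converse follows by perturbing [T + N] with [-N]. *)

From Pilot Require Import Defs.
From HB Require Import structures.
From mathcomp Require Import all_boot all_order all_algebra.
From mathcomp Require Import complex.
From mathcomp Require Import all_classical all_reals all_analysis.
From mathcomp Require Import ring.
Set Implicit Arguments. Unset Strict Implicit. Unset Printing Implicit Defensive.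
Import Order.TTheory GRing.Theory Num.Theory.
Import numFieldNormedType.Exports.
Local Open Scope classical_set_scope.
Local Open Scope ring_scope.

Lemma harmonic_le (F : numFieldType) (a b : F) : 0 < a -> 0 < b -> a * b / (a + b) <= a.
Proof.
move=> a0 b0; have ab : 0 < a + b by rewrite addr_gt0.
by rewrite -mulrA ger_pMr // ler_pdivrMr // mul1r lerDr ltW.
Qed.

Section complex_scalars.
Variable R : realType.
Local Notation C := (R[i])%C.

Lemma gtc0_real (e : C) : 0 < e -> e = ((complex.Re e)%:C)%C /\ 0 < complex.Re e.
Proof. by case: e => a b; rewrite ltcE /= => /andP[/eqP -> ha]. Qed.

Lemma gtc0_lt_nat {e : C} : 0 < e -> exists n : nat, e < n%:R.
Proof.
move=> /gtc0_real[-> e0]; exists (Num.Def.truncn (complex.Re e)).+1.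
by rewrite -(rmorph_nat (real_complex R)) ltcR truncnS_gt.
Qed.

Lemma halving_lt {e B : C} : 0 < e -> 0 <= B -> exists n : nat, B * (2^-1) ^+ n < e.
Proof.
move=> e0 B0; have [n hn] := gtc0_lt_nat (divr_gt0 (ltr_wpDl B0 ltr01) e0).
exists n; have h2 : (0 : C) < 2 ^+ n by rewrite exprn_gt0.
rewrite exprVn -ltr_pdivlMr // invrK.
apply: (lt_le_trans (y := B + 1)); first by rewrite ltrDl ltr01.
rewrite mulrC -ler_pdivrMr // (le_trans (ltW hn)) // -natrX ler_nat.
exact: ltnW (ltn_expl _ _).
Qed.

End complex_scalars.

Section banach_space.
Variable R : realType.
Local Notation C := (R[i])%C.
Variable V : completeNormedModType C.

Lemma halving_bounded_eq0 (z : V) (B : C) :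
  (forall j, `|z| <= B * (2^-1) ^+ j) -> z = 0.
Proof.
move=> hz; have [//|nz] := eqVneq z 0.
have z0 : 0 < `|z| by rewrite normr_gt0.
have B0 : 0 <= B by have := le_trans (normr_ge0 z) (hz 0%N); rewrite expr0 mulr1.
have [j hj] := halving_lt z0 B0.
by have := lt_le_trans hj (hz j); rewrite ltxx.
Qed.

Lemma halving_cauchy_limit (u : nat -> V) (r : nat -> C) :
  (forall n, r n.+1 <= r n / 2) -> (forall n, `|u n.+1 - u n| <= r n / 2) ->
  exists l, forall n, `|l - u n| <= r n.
Proof.
move=> hr hu.
have r0 n : 0 <= r n.
  by have := le_trans (normr_ge0 _) (hu n); rewrite pmulr_lge0 // invr_gt0 ltr0n.
have tail n d : `|u (n + d)%N - u n| <= r n - r (n + d)%N.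
  elim: d => [|d IH]; first by rewrite addn0 !subrr normr0.
  rewrite addnS -(subrK (u (n + d)%N) (u (n + d).+1)) -addrA.
  apply: le_trans (ler_normD _ _) _; apply: le_trans (lerD (hu _) IH) _.
  have -> : r (n + d)%N / 2 + (r n - r (n + d)%N) = r n - r (n + d)%N / 2 by field.
  by rewrite lerD2l lerN2 hr.
have rgeo n : r n <= r 0%N * (2^-1) ^+ n.
  elim: n => [|n IH]; first by rewrite expr0 mulr1.
  by rewrite (le_trans (hr n)) // exprSr mulrA ler_pM2r.
have /cvg_ex[l ul] : cvg (u @ \oo).
  apply: cauchy_cvg; apply: cauchy_exP => e e0.
  have [n hn] := halving_lt e0 (r0 0%N).
  exists (u n); exists n => // m /= nm.
  rewrite -ball_normE /ball_ /= -(subnKC nm) distrC.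
  apply: le_lt_trans (tail _ _) (le_lt_trans _ (le_lt_trans (rgeo n) hn)).
  by rewrite lerBlDr lerDl.
exists l => n; apply/ler_addgt0Pr => e e0.
have [N _ hN] := (cvgrPdist_lt _ _).1 ul e e0.
set m := maxn N n.
have hm : `|u m - u n| <= r n.
  have := tail n (m - n)%N; rewrite subnKC ?leq_maxr // => h.
  by apply: le_trans h _; rewrite lerBlDr lerDl r0.
rewrite -(subrK (u m) l) -addrA addrC; apply: le_trans (ler_normD _ _) _.
by rewrite lerD // ltW // hN /= ?leq_maxl.
Qed.

Definition linear_op (A : V -> V) :=
  forall (a : C) (x y : V), A (a *: x + y) = a *: A x + A y.

Definition linear_of {A : V -> V} (hA : linear_op A) : {linear V -> V} :=
  HB.pack A (GRing.isLinear.Build _ _ _ _ A hA).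

Section linear_op.
Variable A : V -> V.
Hypothesis hA : linear_op A.

Lemma linop0 : A 0 = 0. Proof. exact: (linear0 (linear_of hA)). Qed.
Lemma linopD x y : A (x + y) = A x + A y. Proof. exact: (linearD (linear_of hA)). Qed.
Lemma linopB x y : A (x - y) = A x - A y. Proof. exact: (linearB (linear_of hA)). Qed.
Lemma linopN x : A (- x) = - A x. Proof. exact: (linearN (linear_of hA)). Qed.
Lemma linopZ (a : C) x : A (a *: x) = a *: A x. Proof. by have := hA a x 0; rewrite addr0 linop0 addr0. Qed.

Lemma linop_bounded : continuous A -> exists2 L : C, 0 < L & forall x, `|A x| <= L * `|x|.
Proof.
move=> cA; have := continuous_linear_bounded 0 (f := linear_of hA) (cA 0).
by move=> /linear_boundedP /pinfty_ex_gt0 [L L0 hL]; exists L.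
Qed.

End linear_op.

Lemma closed_approx {Y : set V} {l : V} : closed Y ->
  (forall e : C, 0 < e -> exists2 y, Y y & `|l - y| < e) -> Y l.
Proof.
move=> cY h; apply: cY => B /nbhs_ballP [e e0 hB].
have [y Yy hy] := h e e0; exists y; split => //; apply: hB.
by rewrite -ball_normE.
Qed.

Lemma closure_approx {Y : set V} {l : V} : closure Y l ->
  forall e : C, 0 < e -> exists2 y, Y y & `|l - y| < e.
Proof.
move=> cl e e0; have /cl[y [Yy hy]] : nbhs l (ball l e) by apply/nbhs_ballP; exists e.
by exists y; move: hy; rewrite -ball_normE.
Qed.

Lemma closed_avoid_ball {E : set V} {y : V} {r : C} : closed E -> ~ E y -> 0 < r ->
  exists2 s : C, 0 < s & s <= r /\ forall z, `|z - y| <= s -> ~ E z.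
Proof.
move=> cE nE r0; have /nbhs_ballP[rho rho0 hrho] : nbhs y (~` E).
  by apply: open_nbhs_nbhs; split; rewrite ?openC.
set s := rho * r / (rho + r).
have s0 : 0 < s by rewrite divr_gt0 ?mulr_gt0 ?addr_gt0.
have s_rho : s <= rho by exact: harmonic_le.
have s_r : s <= r by rewrite /s [rho * _]mulrC [rho + _]addrC harmonic_le.
have s2 : s / 2 < s by rewrite gtr_pMr // invf_lt1 // ltr1n.
exists (s / 2); first by rewrite divr_gt0.
split=> [|z hz]; first exact: le_trans (ltW s2) s_r.
apply: hrho; rewrite -ball_normE /ball_ /= distrC.
exact: le_lt_trans hz (lt_le_trans s2 s_rho).
Qed.

(* The library's [Baire] only covers whole normed spaces over a [realType]. *)
Lemma baire_closed (Y : set V) (E : nat -> set V) (y00 : V) : closed Y -> Y y00 ->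
  (forall n, closed (E n)) -> (forall y, Y y -> exists n, E n y) ->
  exists n y0, exists2 r : C, 0 < r &
    Y y0 /\ forall y, Y y -> `|y - y0| < r -> E n y.
Proof.
move=> cY Yy00 cE cover; apply: contrapT => nint.
have escape n y0 (r : C) : Y y0 -> 0 < r ->
    exists2 y, Y y & `|y - y0| < r / 2 /\ ~ E n y.
  move=> Yy0 r0; apply: contrapT => h; apply: nint.
  exists n, y0, (r / 2); first by rewrite divr_gt0.
  split => // y Yy hy; apply: contrapT => nE; apply: h; by exists y.
have step (nyr : nat * (V * C)) : exists yr : V * C, Y nyr.2.1 -> 0 < nyr.2.2 ->
    [/\ Y yr.1, 0 < yr.2, `|yr.1 - nyr.2.1| <= nyr.2.2 / 2, yr.2 <= nyr.2.2 / 2 &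
        forall z, `|z - yr.1| <= yr.2 -> ~ E nyr.1 z].
  case: nyr => n [y0 r] /=.
  have [[Yy0 r0]|h] := pselect (Y y0 /\ 0 < r); last first.
    by exists (y0, r) => Yy0 r0; exfalso; apply: h.
  have [y Yy [hy nE]] := escape n y0 r Yy0 r0.
  have [s s0 [s_r avoid]] := closed_avoid_ball (cE n) nE (divr_gt0 r0 (ltr0n _ 2)).
  by exists (y, s); split => //; exact: ltW.
have [f hf] := choice step.
pose fix b n := if n is m.+1 then f (m, b m) else (y00, 1 : C).
have b_inv n : Y (b n).1 /\ 0 < (b n).2.
  elim: n => [|n [Yb b0]]; first exact: (conj Yy00 ltr01).
  by have [] := hf (n, b n) Yb b0.
have hb n := hf (n, b n) (b_inv n).1 (b_inv n).2.
have [l hl] := @halving_cauchy_limit (fun n => (b n).1) (fun n => (b n).2)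
  (fun n => let: And5 _ _ _ h _ := hb n in h)
  (fun n => let: And5 _ _ h _ _ := hb n in h).
have b_small n : (b n).2 <= (2^-1) ^+ n.
  elim: n => [|n IH]; first by rewrite expr0.
  have [_ _ _ h _] := hb n; apply: le_trans h _.
  by rewrite exprSr ler_pM2r.
have Yl : Y l.
  apply: closed_approx cY _ => e e0.
  have [n hn] := halving_lt e0 (ler01 : (0 : C) <= 1).
  exists (b n).1; first exact: (b_inv n).1.
  by apply: le_lt_trans (hl n) (le_lt_trans (b_small n) _); rewrite mul1r in hn.
have [n En] := cover l Yl.
by have [_ _ _ _ nE] := hb n; apply: nE (hl n.+1) En.
Qed.

Lemma halving_preimage {A : V -> V} {y : V} {w : nat -> V} {r B : C} :
  linear_op A -> continuous A ->
  (forall j, `|w j.+1 - w j| <= r * (2^-1) ^+ j.+1) ->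
  (forall j, `|y - A (w j)| <= B * (2^-1) ^+ j) ->
  exists2 l, A l = y & `|l - w 0%N| <= r.
Proof.
move=> hA cA hw hy.
have [l hl] : exists l, forall j, `|l - w j| <= r * (2^-1) ^+ j.
  apply: halving_cauchy_limit => j; first by rewrite exprSr mulrA.
  by rewrite -mulrA -exprSr.
have [L L0 hL] := linop_bounded hA cA.
exists l; last by have := hl 0%N; rewrite expr0 mulr1.
apply/eqP; rewrite -subr_eq0; apply/eqP.
apply: (@halving_bounded_eq0 _ (L * r + B)) => j.
have -> : A l - y = A (l - w j) - (y - A (w j)) by rewrite (linopB hA) opprB addrA subrK.
apply: le_trans (ler_normB _ _) _; rewrite mulrDl; apply: lerD (hy j).
by apply: le_trans (hL _) _; rewrite -mulrA ler_pM2l.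
Qed.

Definition bounded_lift (A : V -> V) (D : C) :=
  forall x, exists x', A x' = A x /\ `|x'| <= D * `|A x|.

Lemma bounded_lift_closed_range (A : V -> V) (D : C) :
  linear_op A -> continuous A -> 0 <= D -> bounded_lift A D -> closed (range A).
Proof.
move=> hA cA D0 liftA y cly.
have h2 : (0 : C) < 2^-1 by rewrite invr_gt0 ltr0n.
have approx j : exists x, `|y - A x| < (2^-1) ^+ j.
  by have [_ [x _ <-] hx] := closure_approx cly (exprn_gt0 j h2); exists x.
have [f hf] := choice approx.
have [d hd] := choice (fun j => liftA (f j.+1 - f j)).
pose fix z j := if j is i.+1 then z i + d i else f 0%N.
have Az j : A (z j) = A (f j).
  by elim: j => [//|j IH] /=; rewrite (linopD hA) IH (hd j).1 (linopB hA) addrC subrK.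
have z_step j : `|z j.+1 - z j| <= (4 * D) * (2^-1) ^+ j.+1.
  rewrite /= addrAC subrr add0r; apply: le_trans (hd j).2 _.
  have Ad : `|A (f j.+1 - f j)| <= 2 * (2^-1) ^+ j.
    have -> : A (f j.+1 - f j) = (y - A (f j)) - (y - A (f j.+1)).
      by rewrite (linopB hA) opprB [RHS]addrC addrA subrK.
    apply: le_trans (ler_normB _ _) _; rewrite mulr_natl mulr2n.
    apply: lerD; first exact: ltW.
    apply: le_trans (ltW (hf j.+1)) _.
    by rewrite exprSr ger_pMr ?exprn_gt0 // invf_le1 // ler1n.
  apply: le_trans (ler_wpM2l D0 Ad) _.
  by rewrite exprSr (_ : 4 * D * _ = D * (2 * (2^-1) ^+ j)) //; field.
have [l Al _] : exists2 l, A l = y & `|l - z 0%N| <= 4 * D.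
  apply: (@halving_preimage A y z (4 * D) 1) hA cA z_step _ => j.
  by rewrite mul1r Az ltW.
by exists l.
Qed.

(* Baire puts a relative ball of [range A] inside the closure of the image of some
   ball; differences of its points fill a ball around [0]. *)
Lemma closed_range_approx_lift {A : V -> V} : linear_op A -> closed (range A) ->
  exists2 r : C, 0 < r & exists2 K : C, 0 < K & forall y, range A y -> `|y| < r ->
    forall e : C, 0 < e -> exists x, `|x| < K /\ `|A x - y| < e.
Proof.
move=> hA cY.
pose E n := closure (A @` [set x | `|x| < n.+1%:R]).
have [n [_ [r r0 [[b _ <-] hE]]]] : exists n y0, exists2 r : C, 0 < r &
    range A y0 /\ forall y, range A y -> `|y - y0| < r -> E n y.
  apply: (@baire_closed _ _ 0) => //.
  - by exists 0 => //; rewrite (linop0 hA).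
  - by move=> n; exact: closed_closure.
  move=> _ [x _ <-]; have [n hn] := gtc0_lt_nat (ltr_pwDr ltr01 (normr_ge0 x)).
  exists n; apply: subset_closure; exists x => //=.
  apply: lt_trans (ltr_pwDr ltr01 (lexx _)) (lt_le_trans hn _).
  by rewrite ler_nat.
exists r => //; exists (n.+1%:R + n.+1%:R); first by rewrite addr_gt0 ?ltr0n.
move=> _ [a _ <-] ha e e0.
have e20 : 0 < e / 2 by rewrite divr_gt0.
have E1 : E n (A b + A a).
  apply: hE; first by exists (b + a) => //; rewrite (linopD hA).
  by rewrite addrAC subrr add0r.
have E0 : E n (A b) by apply: hE; rewrite ?subrr ?normr0 //; exists b.
have [_ [x1 hx1 <-] h1] := closure_approx E1 e20.
have [_ [x2 hx2 <-] h2] := closure_approx E0 e20.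
exists (x1 - x2); split; first exact: le_lt_trans (ler_normB _ _) (ltrD hx1 hx2).
have -> : A (x1 - x2) - A a = - ((A b + A a) - A x1) + (A b - A x2).
  by rewrite (linopB hA) opprB opprD !addrA (addrAC (A x1) (- A b) (- A a)) subrK addrAC.
by rewrite [e]splitr; apply: le_lt_trans (ler_normD _ _) _; rewrite normrN ltrD.
Qed.

Lemma approx_lift_homogeneous {A : V -> V} {r K : C} : linear_op A -> 0 < r -> 0 < K ->
  (forall y, range A y -> `|y| < r ->
    forall e : C, 0 < e -> exists x, `|x| < K /\ `|A x - y| < e) ->
  forall y, range A y -> forall e : C, 0 < e ->
    exists x, `|x| <= 2 * K / r * `|y| /\ `|A x - y| < e.
Proof.
move=> hA r0 K0 near0 _ [a _ <-] e e0.
have [Aa0|Aa_neq0] := eqVneq (A a) 0.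
  by exists 0; rewrite (linop0 hA) Aa0 subr0 !normr0 mulr0.
have Aa_gt0 : 0 < `|A a| by rewrite normr_gt0.
set t : C := r / (2 * `|A a|).
have t0 : 0 < t by rewrite divr_gt0 // mulr_gt0.
have ht : `|t *: A a| < r.
  rewrite normrZ gtr0_norm // /t invfM -!mulrA mulVf ?mulr1 ?gt_eqF //.
  by rewrite gtr_pMr // invf_lt1 // ltr1n.
have [x [hx hAx]] := near0 _ (ex_intro2 _ _ (t *: a) I (linopZ hA _ _)) ht _
  (mulr_gt0 t0 e0).
exists (t^-1 *: x); split.
  rewrite normrZ gtr0_norm ?invr_gt0 //.
  apply: le_trans (ler_wpM2l _ (ltW hx)) _; first by rewrite invr_ge0 ltW.
  by rewrite (_ : t^-1 * K = 2 * K / r * `|A a|) // /t; field; rewrite !gt_eqF.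
have -> : A (t^-1 *: x) - A a = t^-1 *: (A x - t *: A a).
  by rewrite scalerBr scalerA mulVf ?scale1r ?(linopZ hA) // gt_eqF.
by rewrite normrZ gtr0_norm ?invr_gt0 // -ltr_pdivlMl ?invr_gt0 // invrK.
Qed.

(* Successive approximate preimages of the remaining error add up to an exact one. *)
Lemma approx_lift_exact {A : V -> V} {D : C} : linear_op A -> continuous A -> 0 <= D ->
  (forall y, range A y -> forall e : C, 0 < e ->
    exists x, `|x| <= D * `|y| /\ `|A x - y| < e) ->
  bounded_lift A (2 * D).
Proof.
move=> hA cA D0 approx x0; set y := A x0.
have [y0|y_neq0] := eqVneq y 0.
  by exists 0; rewrite (linop0 hA) y0 normr0 mulr0.
have y_gt0 : 0 < `|y| by rewrite normr_gt0.
have h2 : (0 : C) < 2^-1 by rewrite invr_gt0 ltr0n.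
have approx_j (zj : V * nat) : exists x, range A zj.1 ->
    `|x| <= D * `|zj.1| /\ `|A x - zj.1| < `|y| * (2^-1) ^+ zj.2.+1.
  case: zj => z j /=; have [hz|] := pselect (range A z); last by exists 0.
  have [x hx] := approx z hz _ (mulr_gt0 y_gt0 (exprn_gt0 j.+1 h2)).
  by exists x.
have [g hg] := choice approx_j.
pose fix w j := if j is k.+1 then w k + g (y - A (w k), k) else 0.
have rem v : range A (y - A v) by exists (x0 - v) => //; rewrite (linopB hA).
have w_err j : `|y - A (w j)| <= `|y| * (2^-1) ^+ j.
  elim: j => [|j IH] /=; first by rewrite (linop0 hA) subr0 expr0 mulr1.
  have [_ h] := hg (y - A (w j), j) (rem _).
  set d := g (y - A (w j), j) in h *.
  have -> : y - A (w j + d) = - (A d - (y - A (w j))).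
    by rewrite (linopD hA) opprD addrA opprB.
  by rewrite normrN ltW.
have w_step j : `|w j.+1 - w j| <= (2 * D * `|y|) * (2^-1) ^+ j.+1.
  rewrite /= addrAC subrr add0r; have [h _] := hg (y - A (w j), j) (rem _).
  apply: le_trans h (le_trans (ler_wpM2l D0 (w_err j)) _).
  by rewrite exprSr (_ : 2 * D * _ * _ = D * (`|y| * (2^-1) ^+ j)) //; field.
have [l Al hl] := halving_preimage hA cA w_step w_err.
by exists l; split; rewrite // -[l]subr0.
Qed.

Lemma closed_range_bounded_lift (A : V -> V) : linear_op A -> continuous A ->
  closed (range A) -> exists2 D : C, 0 <= D & bounded_lift A D.
Proof.
move=> hA cA cY; have [r r0 [K K0 near0]] := closed_range_approx_lift hA cY.
have D0 : 0 <= 2 * K / r by rewrite ltW // divr_gt0 ?mulr_gt0.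
exists (2 * (2 * K / r)); first by rewrite mulr_ge0.
exact: approx_lift_exact hA cA D0 (approx_lift_homogeneous hA r0 K0 near0).
Qed.

End banach_space.

Section operators.
Variable R : realType.
Local Notation C := (R[i])%C.
Variable V : completeNormedModType C.
Implicit Types (A B S N : V -> V) (K : set V).

Lemma opowS A n x : opow A n.+1 x = A (opow A n x). Proof. by []. Qed.
Lemma opowSr A n x : opow A n.+1 x = opow A n (A x). Proof. exact: iterSr. Qed.
Lemma opowD A m n x : opow A (m + n) x = opow A m (opow A n x). Proof. exact: iterD. Qed.

Lemma opow_commute A B : (forall x, A (B x) = B (A x)) ->
  forall n x, opow A n (B x) = B (opow A n x).
Proof. by move=> AB; elim=> [//|n IH] x; rewrite !opowS IH AB. Qed.

Lemma linear_opow A : linear_op A -> forall n, linear_op (opow A n).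
Proof. by move=> hA; elim=> [//|n IH] a x y; rewrite !opowS IH hA. Qed.

Lemma continuous_opow A : continuous A -> forall n, continuous (opow A n).
Proof.
move=> cA; elim=> [|n IH] x; first exact: cvg_id.
exact: continuous_comp (IH x) (cA _).
Qed.
Arguments continuous_opow {A} cA n.

Lemma opow_stable A K : (forall k, K k -> K (A k)) -> forall n k, K k -> K (opow A n k).
Proof. by move=> AK; elim=> [//|n IH] k Kk; rewrite opowS; apply/AK/IH. Qed.

Lemma linear_op_add S N : linear_op S -> linear_op N -> linear_op (fun x => S x + N x).
Proof.
move=> hS hN a x y; rewrite hS hN scalerDr -!addrA; congr (_ + _).
by rewrite addrCA.
Qed.

Lemma opow_add_eq0 S N : linear_op S -> linear_op N -> (forall x, S (N x) = N (S x)) ->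
  forall a b x, opow S a x = 0 -> opow N b x = 0 ->
  opow (fun y => S y + N y) (a + b) x = 0.
Proof.
move=> hS hN SN; have hM := linear_opow (linear_op_add hS hN).
suff sum_eq0 n a b x : (a + b)%N = n -> opow S a x = 0 -> opow N b x = 0 ->
    opow (fun y => S y + N y) n x = 0.
  by move=> a b x; exact: sum_eq0.
elim: n a b x => [|n IHn] a b x.
  by case: a b => [|a] [|b] // _ Sx _; exact: Sx.
case: a => [|a]; first by move=> _ Sx _; rewrite -[x]/(opow S 0 x) Sx (linop0 (hM _)).
case: b => [|b]; first by move=> _ _ Nx; rewrite -[x]/(opow N 0 x) Nx (linop0 (hM _)).
rewrite addSn => -[ab] Sx Nx.
have Sx0 : opow (fun y => S y + N y) n (S x) = 0.
  apply: IHn ab _ _; first by rewrite -opowSr.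
  by rewrite (opow_commute (fun y => esym (SN y))) Nx (linop0 hS).
have Nx0 : opow (fun y => S y + N y) n (N x) = 0.
  apply: (IHn a.+1 b); first by rewrite addSn -addnS.
    by rewrite (opow_commute SN) Sx (linop0 hN).
  by rewrite -opowSr.
by rewrite opowSr (linopD (hM n)) Sx0 Nx0 addr0.
Qed.

Lemma kernelE A x : Defs.kernel A x = (A x = 0). Proof. by []. Qed.

Definition is_addsubgroup K := K 0 /\ forall x y, K x -> K y -> K (x - y).

(* dist(B x, K) <= D dist(A x, K), with the nearest points of [K] replaced by explicit
   witnesses; for [B = id], [A] induces a map bounded below on [V / K]. *)
Definition dominated_mod K A B := exists2 D : C, 0 <= D &
  forall x k', K k' -> exists2 k, K k & `|B x - k| <= D * `|A x - k'|.

Lemma dominated_mod_opow K A n : dominated_mod K A id -> dominated_mod K (opow A n) id.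
Proof.
move=> [D D0 hA]; elim: n => [|n [E E0 hE]].
  by exists 1 => // x k' Kk'; exists k'; rewrite ?mul1r.
exists (E * D) => [|x k' Kk']; first exact: mulr_ge0.
have [k1 Kk1 h1] := hA (opow A n x) k' Kk'.
have [k Kk h] := hE x k1 Kk1; exists k => //.
by apply: le_trans h _; rewrite -mulrA ler_wpM2l.
Qed.

Lemma dominated_mod_kernel K A : dominated_mod K A id -> K 0 ->
  forall x, A x = 0 -> K x.
Proof.
move=> [D _ hA] K0 x Ax; have [k Kk] := hA x 0 K0.
by rewrite Ax subr0 normr0 mulr0 normr_le0 subr_eq0 => /eqP->.
Qed.

Lemma dominated_mod_closed_range K A : linear_op A -> continuous A ->
  dominated_mod K A id -> K 0 -> (forall k, K k -> A k = 0) -> closed (range A).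
Proof.
move=> hA cA [D D0 domA] K0 AK; apply: (bounded_lift_closed_range hA cA D0) => x.
have [k Kk hk] := domA x 0 K0; exists (x - k).
by rewrite (linopB hA) (AK _ Kk) !subr0 in hk *.
Qed.

Section nilpotent_perturbation.
Variables (K : set V) (S N : V -> V) (k0 : nat).
Hypotheses (K_sub : is_addsubgroup K) (hN : linear_op N) (cN : continuous N).
Hypotheses (NK : forall k, K k -> K (N k)) (N_nil : forall x, opow N k0 x = 0).
Hypothesis SN : forall x, S (N x) = N (S x).
Local Notation M := (fun x => S x + N x).

Lemma dominated_mod_opow_pred i : dominated_mod K S id ->
  dominated_mod K M (opow N i.+1) -> dominated_mod K M (opow N i).
Proof.
move=> [D D0 hS] [E E0 hE].
have hNi := linear_opow hN i.
have [L L0 hL] := linop_bounded hNi (continuous_opow cN i).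
exists (D * (L + E)) => [|x k' Kk']; first by rewrite mulr_ge0 // addr_ge0 // ltW.
have [k1 Kk1 h1] := hE x k' Kk'.
have Kk'' : K (opow N i k' - k1) := K_sub.2 _ _ (opow_stable NK i Kk') Kk1.
have [k Kk hk] := hS (opow N i x) _ Kk''; exists k => //.
have split_err : S (opow N i x) - (opow N i k' - k1) =
    opow N i (M x - k') - (opow N i.+1 x - k1).
  rewrite (linopB hNi) (linopD hNi) -opowSr -(opow_commute (fun y => esym (SN y))).
  move: (opow N i (S x)) (opow N i.+1 x) (opow N i k') => a b c.
  by apply: esym; rewrite opprB addrAC -addrA -addrA (addrA b) (addrC b) subrK opprB.
rewrite split_err in hk; apply: le_trans hk _; rewrite -mulrA ler_wpM2l //.
by apply: le_trans (ler_normB _ _) _; rewrite mulrDl lerD.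
Qed.

(* The nilpotency of [N] lets the estimate descend from [N ^ k0 = 0] to [N ^ 0]. *)
Lemma dominated_mod_nilpotent_perturb :
  dominated_mod K S id -> dominated_mod K M id.
Proof.
move=> domS; suff dom d i : (k0 <= i + d)%N -> dominated_mod K M (opow N i).
  exact: (dom k0 0%N).
elim: d i => [|d IHd] i hi.
  exists 0 => // x k' Kk'; exists 0; first exact: K_sub.1.
  rewrite addn0 in hi; rewrite -(subnK hi) opowD N_nil.
  by rewrite (linop0 (linear_opow hN _)) subr0 normr0 mul0r.
by apply: dominated_mod_opow_pred => //; apply: IHd; rewrite addSnnS.
Qed.

End nilpotent_perturbation.

Definition bounded_below A :=
  exists c : R, 0 < c /\ forall x, (c%:C)%C * `|x| <= `|A x|.

Lemma bounded_below_dominated A : bounded_below A -> dominated_mod [set 0] A id.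
Proof.
move=> [c [c0 hc]]; have c0' : (0 : C) < c%:C%C by rewrite ltcR.
exists (c%:C%C)^-1 => [|x _ ->]; first by rewrite invr_ge0 ltW.
by exists 0 => //; rewrite !subr0 ler_pdivlMl.
Qed.

Lemma dominated_bounded_below A : dominated_mod [set 0] A id -> bounded_below A.
Proof.
move=> [D D0 hA]; have D1 : 0 < D + 1 := ltr_wpDl D0 ltr01.
have [eD c0] : (D + 1)^-1 = (complex.Re (D + 1)^-1)%:C%C /\ 0 < complex.Re (D + 1)^-1.
  by apply: gtc0_real; rewrite invr_gt0.
exists (complex.Re (D + 1)^-1); split => // x; rewrite -eD ler_pdivrMl //.
have [_ -> hx] := hA x 0 erefl; rewrite !subr0 in hx.
by apply: le_trans hx _; rewrite ler_wpM2r // lerDl.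
Qed.

Lemma kernel_opow_stable A q : Defs.kernel (opow A q) = Defs.kernel (opow A q.+1) ->
  forall d x, opow A (q + d) x = 0 -> opow A q x = 0.
Proof.
move=> hq; elim=> [|d IHd] x; first by rewrite addn0.
rewrite addnS opowSr => /IHd Ax0.
have : Defs.kernel (opow A q.+1) x := etrans (opowSr A q x) Ax0.
by rewrite -hq.
Qed.

Lemma exists_asc A m : Defs.kernel (opow A m) = Defs.kernel (opow A m.+1) ->
  exists2 q, is_asc A q & forall x, opow A m x = 0 -> opow A q x = 0.
Proof.
move=> Pm; pose P n := Defs.kernel (opow A n) = Defs.kernel (opow A n.+1).
have [q /asboolP Pq q_min] := ex_minnP (ex_intro (fun n => `[< P n >]) m (asboolT Pm)).
have q_le_m : (q <= m)%N := q_min m (asboolT Pm).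
exists q => [|x]; last by rewrite -(subnKC q_le_m); exact: kernel_opow_stable.
by split => // k kq Pk; have := q_min k (asboolT Pk); rewrite leqNgt kq.
Qed.

Lemma bounded_op_add S N : bounded_op S -> bounded_op N -> bounded_op (fun x => S x + N x).
Proof.
move=> [hS cS] [hN cN]; split; first exact: linear_op_add.
by move=> x; exact: cvgD (cS x) (cN x).
Qed.

Lemma bounded_op_opp N : bounded_op N -> bounded_op (fun x => - N x).
Proof.
move=> [hN cN]; split; last by move=> x; exact: cvgN (cN x).
by move=> a x y; rewrite hN opprD scalerN.
Qed.

Lemma bounded_op_shift A l : bounded_op A -> bounded_op (Defs.shift A l).
Proof.
move=> [hA cA]; split=> [a x y|x].
  rewrite /Defs.shift hA scalerDr scalerBr !scalerA [l * a]mulrC opprD.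
  by rewrite addrACA.
by apply: cvgB (cA x) (cvgZ _ _); [exact: cvg_cst | exact: cvg_id].
Qed.

Lemma nilpotent_opp N : linear_op N -> nilpotent N -> nilpotent (fun x => - N x).
Proof.
move=> hN [k hk]; exists k => x.
suff -> : opow (fun y => - N y) k x = (-1) ^+ k *: opow N k x by rewrite hk scaler0.
elim: k {hk} x => [|k IHk] x; first by rewrite expr0 scale1r.
by rewrite !opowS IHk (linopZ hN) exprS -scalerA scaleN1r.
Qed.

Lemma bounded_below_nilpotent_perturb S N : linear_op N -> continuous N ->
  nilpotent N -> (forall x, S (N x) = N (S x)) ->
  bounded_below S -> bounded_below (fun x => S x + N x).
Proof.
move=> hN cN [k0 N_nil] SN /bounded_below_dominated domS.
apply/dominated_bounded_below/(dominated_mod_nilpotent_perturb _ hN cN _ N_nil) => //.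
- by split => // x y -> ->; rewrite subr0.
- by move=> k ->; rewrite (linop0 hN).
Qed.

Lemma left_drazin_dominated_mod S p : linear_op S -> continuous S ->
  Defs.kernel (opow S p) = Defs.kernel (opow S p.+1) ->
  closed (range (opow S p.+1)) -> dominated_mod (Defs.kernel (opow S p)) S id.
Proof.
move=> hS cS hker hcl; have hSp := linear_opow hS p; have hSp1 := linear_opow hS p.+1.
have [D D0 liftS] := closed_range_bounded_lift hSp1 (continuous_opow cS p.+1) hcl.
have [L L0 hL] := linop_bounded hSp (continuous_opow cS p).
exists (D * L) => [|x k' Kk']; first by rewrite mulr_ge0 // ltW.
have [x' [ex' hx']] := liftS x; exists (x - x').
  have Sx : opow S p.+1 (x - x') = 0 by rewrite (linopB hSp1) ex' subrr.
  by rewrite hker.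
rewrite opprB addrC subrK; apply: le_trans hx' _; rewrite -mulrA ler_wpM2l //.
have -> : opow S p.+1 x = opow S p (S x - k').
  by move: Kk'; rewrite kernelE (linopB hSp) => ->; rewrite subr0 opowSr.
exact: hL.
Qed.

Lemma add_opp_commute S N : linear_op S -> linear_op N -> (forall x, S (N x) = N (S x)) ->
  forall x, S (- N x) + N (- N x) = - N (S x + N x).
Proof. by move=> hS hN SN x; rewrite (linopN hS) (linopN hN) -opprD SN (linopD hN). Qed.

Lemma left_drazin_nilpotent_perturb S N : bounded_op S -> bounded_op N -> nilpotent N ->
  (forall x, S (N x) = N (S x)) ->
  left_drazin_invertible S -> left_drazin_invertible (fun x => S x + N x).
Proof.
move=> [hS cS] [hN cN] [k0 N_nil] SN [p [[hker _] hcl]].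
have [hM cM] := bounded_op_add (conj hS cS) (conj hN cN).
have hSp := linear_opow hS p; set K := Defs.kernel (opow S p).
have K_sub : is_addsubgroup K.
  split=> [|x y]; rewrite /K !kernelE ?(linop0 hSp) // (linopB hSp).
  by move=> -> ->; rewrite subr0.
have NK k : K k -> K (N k) by rewrite /K !kernelE (opow_commute SN) => ->; rewrite (linop0 hN).
have domM := dominated_mod_nilpotent_perturb K_sub hN cN NK N_nil SN
  (left_drazin_dominated_mod hS cS hker hcl).
have K_ker k : K k -> opow (fun x => S x + N x) (p + k0) k = 0.
  by move=> Kk; apply: opow_add_eq0 hS hN SN _ _ _ Kk (N_nil k).
have ker_K n x : opow (fun x => S x + N x) n x = 0 -> K x.
  exact: dominated_mod_kernel (dominated_mod_opow n domM) K_sub.1 x.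
have [q asc_q ker_q] : exists2 q, is_asc (fun x => S x + N x) q &
    forall x, opow (fun x => S x + N x) (p + k0) x = 0 -> opow (fun x => S x + N x) q x = 0.
  apply: exists_asc; apply/seteqP; split=> x; rewrite !kernelE; last by move/ker_K/K_ker.
  by rewrite opowS => ->; rewrite (linop0 hM).
exists q; split => //.
apply: (dominated_mod_closed_range (linear_opow hM _) (continuous_opow cM _)
  (dominated_mod_opow _ domM) K_sub.1).
by move=> k /K_ker /ker_q Mk; rewrite opowS Mk (linop0 hM).
Qed.

Lemma left_poles_nilpotent_perturb T N : bounded_op T -> bounded_op N -> nilpotent N ->
  (forall x, T (N x) = N (T x)) -> left_poles T `<=` left_poles (fun x => T x + N x).
Proof.
move=> bT bN nN TN l [spec_l drazin_l]; have [hN cN] := bN.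
have bS := bounded_op_shift l bT.
have shiftE : Defs.shift (fun x => T x + N x) l = (fun x => Defs.shift T l x + N x).
  by apply/funext => x; rewrite /Defs.shift addrAC.
have SN x : Defs.shift T l (N x) = N (Defs.shift T l x).
  by rewrite /Defs.shift TN (linopB hN) (linopZ hN).
split; last by rewrite shiftE; exact: left_drazin_nilpotent_perturb.
move=> below; apply: spec_l.
have -> : Defs.shift T l = (fun x => Defs.shift (fun x => T x + N x) l x + - N x).
  by apply/funext => x; rewrite shiftE addrK.
apply: (bounded_below_nilpotent_perturb (bounded_op_opp bN).1 (bounded_op_opp bN).2
  (nilpotent_opp hN nN)) below => x.
by rewrite shiftE; exact: add_opp_commute bS.1 hN SN x.
Qed.

End operators.

Theorem corollary3p9 (R : realType) (V : completeNormedModType (R[i])%C)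
  (T N : V -> V) :
  infinite_dim V -> bounded_op T -> bounded_op N -> nilpotent N ->
  (forall x, T (N x) = N (T x)) ->
  left_poles (fun x => T x + N x) = left_poles T.
Proof.
move=> _ bT bN nN TN; apply/seteqP; split; last exact: left_poles_nilpotent_perturb.
have TNN : (fun x => (T x + N x) + - N x) = T by apply/funext => x; rewrite addrK.
rewrite -[X in _ `<=` left_poles X]TNN.
apply: left_poles_nilpotent_perturb.
- exact: bounded_op_add.
- exact: bounded_op_opp.
- exact: nilpotent_opp bN.1 nN.
- exact: add_opp_commute bT.1 bN.1 TN.
Qed.
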